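(* Let $T$ be a finite tree rooted at a fixed non-leaf vertex $r$ and let $k\geq 1$. Define the graphs $I'$ and $I_0,\ldots,I_{k-1}$ on vertex set $V(T)$ as follows: distinct $u,v$ are adjacent in $I'$ iff $f'(u)\cap f'(v)\neq\emptyset$, where $f'(u)=[d_T(r,u),d_T(r,u)+k]$; and distinct $u,v$ are adjacent in $I_i$ iff $f_i(u)\cap f_i(v)\neq\emptyset$, where $f_i(u)=[s(p^i(u)),\,t(p^{k-1-i}(u))]$. If $u,v$ are distinct vertices with $(u,v)\notin E(T^k)$, then either $(u,v)\notin E(I')$ or there exists $i\in\{0,\ldots,k-1\}$ with $(u,v)\notin E(I_i)$.
   Context: $d_T$ is the distance in $T$, and $T^k$ is the graph on $V(T)$ in which distinct $u,v$ are adjacent iff $d_T(u,v)\leq k$. For vertices $u,v$, $u\preceq v$ ($u$ is an ancestor of $v$) means that $u$ lies on the unique path in $T$ from $r$ to $v$. For $u\neq r$, $p(u)$ is the neighbour of $u$ on the path from $u$ to $r$, and $p(r)=r$; $p^0(u)=u$, $p^i(u)=p(p^{i-1}(u))$ for $i\geq1$. Let $l_1,\ldots,l_m$ be the leaves (degree-1 vertices) of $T$ in the order in which they appear in some depth-first traversal of $T$ starting from $r$; for a vertex $u$, $L(u)=\{i: u\preceq l_i\}$, $s(u)=\min L(u)$, $t(u)=\max L(u)$. *)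

From mathcomp Require Import all_boot.
Set Implicit Arguments. Unset Strict Implicit. Unset Printing Implicit Defensive.

Section TreeDefs.
Variables (V : finType) (e : rel V).

Definition is_tree : Prop :=
  symmetric e /\ irreflexive e /\ (forall u v, connect e u v) /\
  ~ (exists c : seq V, [/\ 3 <= size c, uniq c & cycle e c]).

(* Graph distance d_T(u,v): length of a shortest walk from u to v
   (shortest walks in a connected graph have length < #|V|). *)
Definition dist (u v : V) : nat :=
  find (fun n => [exists p : n.-tuple V, path e u p && (last u p == v)])
       (iota 0 #|V|).

Definition onpath (u v w : V) : bool :=
  [exists n : 'I_#|V|, exists p : n.-tuple V,
     [&& path e u p, last u p == v, uniq (u :: p) & w \in u :: p]].

Definition deg (u : V) : nat := #|[set w | e u w]|.
Definition leaf (u : V) : bool := deg u == 1.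

Variable r : V.

Definition anc (u v : V) : bool := onpath r v u.

Definition par (u : V) : V :=
  if u == r then r else odflt u [pick w | e u w && onpath u r w].

Definition pit (i : nat) (u : V) : V := iter i par u.

(* A depth-first traversal from r, in preorder: an enumeration of all
   vertices starting at r in which, for every vertex u, the descendants
   of u form a contiguous block beginning with u. *)
Definition is_dfs (s : seq V) : Prop :=
  [/\ uniq s, forall x, x \in s, head r s = r, 0 < size s &
      forall u, infix [seq x <- s | anc u x] s /\
                head u [seq x <- s | anc u x] = u].

Variable s : seq V.

(* leaves l_0, ..., l_{m-1} in the order of the traversal (0-based) *)
Definition leaves : seq V := [seq x <- s | leaf x].

Definition Lset (u : V) : seq nat :=
  [seq i <- iota 0 (size leaves) | anc u (nth r leaves i)].

Definition sL (u : V) : nat := head 0 (Lset u).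
Definition tL (u : V) : nat := last 0 (Lset u).

Definition meets (a b c d : nat) : Prop :=
  exists x : nat, a <= x <= b /\ c <= x <= d.

Variable k : nat.

Definition adjI' (u v : V) : Prop :=
  u != v /\ meets (dist r u) (dist r u + k) (dist r v) (dist r v + k).

Definition adjI (i : nat) (u v : V) : Prop :=
  u != v /\ meets (sL (pit i u)) (tL (pit (k - 1 - i) u))
                  (sL (pit i v)) (tL (pit (k - 1 - i) v)).

Definition adjTk (u v : V) : Prop := u != v /\ dist u v <= k.

End TreeDefs.

(* Let w be the deepest common ancestor of u and v, with d(r,u) = d(r,w) + a and
   d(r,v) = d(r,w) + b, so that k < d_T(u,v) <= a + b.  If a = 0 or b = 0 the
   depths of u and v differ by more than k, so f'(u) and f'(v) are disjoint.
   Otherwise u and v lie below two distinct children c_u, c_v of w.  Their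
   subtrees are disjoint blocks of the traversal, hence carry disjoint ranges
   of leaf indices.  If c_u comes first, take i = k - min(a, k): then
   p^(k-1-i)(u) is still below c_u and p^i(v) still below c_v, so
   t(p^(k-1-i)(u)) < s(p^i(v)) and f_i(u), f_i(v) are disjoint. *)

From Pilot Require Import Defs.
From mathcomp Require Import all_boot zify.
Set Implicit Arguments. Unset Strict Implicit. Unset Printing Implicit Defensive.

Lemma index_filter_lt (T : eqType) (P : pred T) (s : seq T) x y :
  P x -> P y -> index x s < index y s -> index x (filter P s) < index y (filter P s).
Proof.
move=> Px Py; elim: s => //= h s IHs.
case: (eqVneq h x) Px => [<-|hx] Px; case: (eqVneq h y) Py => [<-|hy] Py //=.
- by rewrite Px /= eqxx (negbTE hy).
- by rewrite ltnS => /IHs; case: (P h) => //=; rewrite (negbTE hx) (negbTE hy).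
Qed.

Lemma mem_cat3_index (T : eqType) (s1 s2 s3 : seq T) y : uniq (s1 ++ s2 ++ s3) ->
  (y \in s2) = (size s1 <= index y (s1 ++ s2 ++ s3) < size s1 + size s2).
Proof.
rewrite cat_uniq => /and3P [_ disj _]; rewrite !index_cat.
have [ys1|ys1] := boolP (y \in s1).
  rewrite (leqNgt _ (index y s1)) index_mem ys1 /=.
  by apply: contraNF disj => ys2; apply/hasP; exists y; rewrite // mem_cat ys2.
rewrite leq_addr ltn_add2l /=; have [ys2|ys2] := boolP (y \in s2); first by rewrite index_mem.
by rewrite ltnNge leq_addr.
Qed.

Section Trees.
Variables (V : finType) (e : rel V).
Hypothesis e_sym : symmetric e.
Hypothesis e_conn : forall u v, connect e u v.

Lemma uniq_size_ltcard x (p : seq V) : uniq (x :: p) -> size p < #|V|.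
Proof. by move=> Up; have := max_card (mem (x :: p)); rewrite (card_uniqP Up). Qed.

Lemma dist_leq_walk x (p : seq V) : path e x p -> dist e x (last x p) <= size p.
Proof.
move=> Pp; case: (shortenP Pp) => q Pq Uq sub_qp.
apply: (leq_trans _ (uniq_leq_size (andP Uq).2 sub_qp)); rewrite /dist leqNgt.
apply/negP => /(before_find 0); rewrite nth_iota ?(uniq_size_ltcard Uq) // add0n.
by move=> /existsP; apply; exists (in_tuple q); rewrite /= Pq eqxx.
Qed.

Lemma shortest_walk x y :
  exists2 p : seq V, path e x p /\ last x p = y & size p = dist e x y.
Proof.
have /connectP [p Pp ->] := e_conn x y; case: (shortenP Pp) => q Pq Uq _.
pose has_walk n := [exists p0 : n.-tuple V, path e x p0 && (last x p0 == last x q)].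
have ex_walk : has has_walk (iota 0 #|V|).
  apply/hasP; exists (size q); first by rewrite mem_iota (uniq_size_ltcard Uq).
  by apply/existsP; exists (in_tuple q); rewrite /= Pq eqxx.
have lt_dist : dist e x (last x q) < #|V| by rewrite -(size_iota 0 #|V|) -has_find.
have := nth_find 0 ex_walk; rewrite -/(dist e x (last x q)) nth_iota // add0n.
by case/existsP => p0 /andP [Pp0 /eqP Lp0]; exists p0; rewrite ?size_tuple.
Qed.

Lemma distxx x : dist e x x = 0.
Proof. by apply/eqP; rewrite -leqn0 (dist_leq_walk (p := [::])). Qed.

Lemma dist_edge x y : e x y -> dist e x y <= 1.
Proof. by move=> Exy; apply: (dist_leq_walk (x := x) (p := [:: y])); rewrite /= Exy. Qed.

Lemma dist_triangle x y z : dist e x z <= dist e x y + dist e y z.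
Proof.
have [p [Pp Lp] <-] := shortest_walk x y; have [q [Pq Lq] <-] := shortest_walk y z.
by rewrite -size_cat -{1}Lq -Lp -last_cat dist_leq_walk // cat_path Pp Lp.
Qed.

Lemma path_rev_belast x (p : seq V) :
  path e x p -> path e (last x p) (rev (belast x p)).
Proof. by rewrite rev_path (eq_path (e' := e)) // => a b; exact: e_sym. Qed.

Lemma last_rev_belast x (p : seq V) : last (last x p) (rev (belast x p)) = x.
Proof. by case: p => //= a p; rewrite rev_cons last_rcons. Qed.

Lemma distC x y : dist e x y = dist e y x.
Proof.
suff le_dist a b : dist e a b <= dist e b a by apply/eqP; rewrite eqn_leq !le_dist.
have [p [Pp Lp] <-] := shortest_walk b a.
have := dist_leq_walk (path_rev_belast Pp).
by rewrite last_rev_belast Lp size_rev size_belast.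
Qed.

Hypothesis e_acyclic : ~ (exists c : seq V, [/\ 3 <= size c, uniq c & cycle e c]).

Definition spath x (p : seq V) y := [&& path e x p, uniq (x :: p) & last x p == y].

Lemma rev_belast_cons x (p : seq V) : last x p :: rev (belast x p) = rev (x :: p).
Proof. by rewrite [in RHS]lastI rev_rcons. Qed.

(* The two paths first meet again at some z; x, the first one up to z and the
   second one back from z form a cycle of length >= 3. *)
Lemma spath_fork x p q y : spath x p y -> spath x q y ->
  p != [::] -> q != [::] -> head x p != head x q -> False.
Proof.
case/and3P=> Pp Up /eqP Lp /and3P [Pq Uq /eqP Lq] p0 q0 hpq.
have last_in s : s != [::] -> last x s \in s by case: s => //= ??; rewrite mem_last.
have meet : has (mem q) p.
  by apply/hasP; exists y; [rewrite -Lp | rewrite -Lq]; exact: last_in.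
set i := find (mem q) p; set z := nth x p i.
have zq : z \in q by exact: nth_find.
set j := index z q.
have Ep : p = take i p ++ z :: drop i.+1 p by rewrite -drop_nth -?has_find ?cat_take_drop.
have Eq : q = take j q ++ z :: drop j.+1 q.
  by rewrite -[X in _ ++ X :: _](nth_index x zq) -drop_nth ?index_mem ?cat_take_drop.
set p1 := take i p in Ep; set q1 := take j q in Eq.
have p1_q : ~~ has (mem q) p1 by rewrite /p1 has_take ?ltnn // ltnW // -has_find.
apply: e_acyclic; exists (x :: p1 ++ z :: rev q1); split.
- rewrite /= size_cat /= size_rev !ltnS addnS ltnS lt0n addn_eq0.
  apply: contra hpq => /andP [/nilP p1_0 /nilP q1_0].
  by rewrite Ep Eq p1_0 q1_0.
- move: Up Uq; rewrite {1}Ep {1}Eq /= !mem_cat !cat_uniq /= !inE !mem_rev rev_uniq.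
  case/andP=> /norP [xp1 /norP [xz _]] /and3P [Up1 /norP [zp1 _] _].
  case/andP=> /norP [xq1 _] /and3P [Uq1 /norP [zq1 _] _].
  rewrite (negbTE xp1) (negbTE xz) (negbTE xq1) (negbTE zp1) Up1 zq1 Uq1 /= andbT.
  apply/hasPn=> w; rewrite mem_rev => wq1; apply: contraNN p1_q => wp1.
  by apply/hasP; exists w; rewrite // inE Eq mem_cat wq1.
- rewrite /= rcons_cat /= cat_path.
  move: Pp; rewrite {1}Ep cat_path /= => /and3P [-> -> _].
  move: Pq; rewrite {1}Eq cat_path /= => /and3P [Pq1 Eq1 _].
  have := path_rev_belast (x := x) (p := rcons q1 z); rewrite rcons_path Pq1 Eq1.
  by rewrite last_rcons belast_rcons rev_cons; apply.
Qed.

Lemma spath_cons x a p y : spath x (a :: p) y -> [/\ e x a, x != y & spath a p y].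
Proof.
case/and3P=> /= /andP [Exa Pp] /andP [xp Up] /eqP Lp; split=> //.
  by apply: contraNneq xp => xy; rewrite xy -Lp mem_last.
by rewrite /spath /= Pp Up Lp eqxx.
Qed.

Lemma spath_uniq x p q y : spath x p y -> spath x q y -> p = q.
Proof.
elim: p x q => [|a p IHp] x [|b q] //.
- by move=> /and3P [_ _ /eqP /= ->] /spath_cons [_]; rewrite eqxx.
- by move=> /spath_cons [_ xy _] /and3P [_ _ /eqP /= yx]; rewrite yx eqxx in xy.
move=> Sp Sq; case: (eqVneq a b) Sq => [<- | ab] Sq.
  by case: (spath_cons Sp) (spath_cons Sq) => _ _ Sp' [_ _ Sq']; rewrite (IHp a q Sp' Sq').
by case: (spath_fork Sp Sq).
Qed.

Lemma spath_rev x p y : spath x p y -> spath y (rev (belast x p)) x.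
Proof.
case/and3P=> Pp Up /eqP <-.
by rewrite /spath path_rev_belast // last_rev_belast eqxx rev_belast_cons rev_uniq Up.
Qed.

Lemma spath_exists x y : exists p, spath x p y.
Proof.
have /connectP [p Pp ->] := e_conn x y.
by case: (shortenP Pp) => q Pq Uq _; exists q; rewrite /spath Pq Uq eqxx.
Qed.

Lemma size_spath x p y : spath x p y -> size p = dist e x y.
Proof.
move=> Sp; have [q [Pq Lq] size_q] := shortest_walk x y.
case: (shortenP Pq) Lq => q' Pq' Uq' sub_q'q Lq'.
have Sq' : spath x q' y by rewrite /spath Pq' Uq' Lq' eqxx.
rewrite (spath_uniq Sp Sq'); apply/eqP; rewrite eqn_leq andbC -Lq' dist_leq_walk // Lq' -size_q.
exact: uniq_leq_size (andP Uq').2 sub_q'q.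
Qed.

Lemma onpathP u v w :
  reflect (exists2 p, spath u p v & w \in u :: p) (onpath e u v w).
Proof.
apply: (iffP existsP) => [[n /existsP [p /and4P [Pp Lp Up wp]]] | [p Sp wp]].
  by exists p; rewrite // /spath Pp Up Lp.
case/and3P: (Sp) => Pp Up Lp; exists (Ordinal (uniq_size_ltcard Up)).
by apply/existsP; exists (in_tuple p); apply/and4P.
Qed.

Lemma onpath_spath u p v w : spath u p v -> onpath e u v w = (w \in u :: p).
Proof.
move=> Sp; apply/onpathP/idP => [[q Sq] | wp]; last by exists p.
by rewrite (spath_uniq Sp Sq).
Qed.

Hypothesis e_irr : irreflexive e.

(* A second neighbour of u further along the path would give a shortcut. *)
Lemma spath_nbr_head u w p y w0 :
  spath u (w :: p) y -> e u w0 -> w0 \in u :: w :: p -> w0 = w.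
Proof.
move=> Sp Euw0; rewrite !inE => /or3P [/eqP w0u | /eqP // | w0p].
  by move: Euw0; rewrite w0u e_irr.
case/splitPr: w0p Sp => p1 p2 Sp.
suff Sp2 : spath u (w0 :: p2) y.
  by have := congr1 size (spath_uniq Sp Sp2); rewrite /= size_cat /=; lia.
case/and3P: Sp => Pp Up Lp.
have Up2 : uniq (u :: w0 :: p2).
  apply: subseq_uniq Up; rewrite -[u :: w0 :: p2]/([:: u] ++ _) subseq_cat2l.
  exact: (suffix_subseq (w :: p1)).
move: Pp Lp; rewrite /= cat_path last_cat /= => /and3P [_ _ /andP [_ Pp2] Lp2].
by apply/and3P; split; rewrite //= Euw0.
Qed.

Variable r : V.

Local Notation depth := (dist e r).
Local Notation par := (par e r).
Local Notation pit := (pit e r).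
Local Notation anc := (anc e r).

Lemma par_root : par r = r.
Proof. by rewrite /Defs.par eqxx. Qed.

Lemma spath_par u w p : spath u (w :: p) r -> par u = w.
Proof.
move=> Sp; have [Euw ur _] := spath_cons Sp.
rewrite /Defs.par (negbTE ur); case: pickP => [w0 /andP [Euw0] | no_nbr] /=.
  by rewrite (onpath_spath _ Sp) => /(spath_nbr_head Sp Euw0).
by have := no_nbr w; rewrite /= Euw (onpath_spath _ Sp) !inE eqxx orbT.
Qed.

Lemma par_edge w : w != r -> e w (par w).
Proof.
move=> wr; have [[|a p] Sp] := spath_exists w r.
  by case/and3P: Sp wr => _ _ /eqP /= ->; rewrite eqxx.
by have [Ewa _ _] := spath_cons Sp; rewrite (spath_par Sp).
Qed.

Lemma edge_par z w : e z w -> par w = z \/ par z = w.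
Proof.
move=> Ezw; have [p Sp] := spath_exists w r.
case: (boolP (z \in w :: p)) => zp.
  left; case: p Sp zp => [|a p] Sp.
    by rewrite inE => /eqP zw; rewrite zw e_irr in Ezw.
  by rewrite (spath_par Sp) => /(spath_nbr_head Sp) -> //; rewrite e_sym.
right; apply: (spath_par (p := p)).
by case/and3P: Sp => Pp Up Lp; apply/and3P; split=> //; [rewrite /= Ezw | apply/andP].
Qed.

Lemma pitS j u : pit j.+1 u = par (pit j u).
Proof. exact: iterS. Qed.

Lemma pitSr j u : pit j.+1 u = pit j (par u).
Proof. exact: iterSr. Qed.

Lemma pitD i j u : pit i (pit j u) = pit (i + j) u.
Proof. by rewrite /Defs.pit iterD. Qed.

Lemma pit_root j : pit j r = r.
Proof. by elim: j => // j IHj; rewrite pitS IHj par_root. Qed.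

Lemma spath_pit u p : spath u p r -> forall x, reflect (exists j, x = pit j u) (x \in u :: p).
Proof.
elim: p u => [|a p IHp] u Sp x.
  case/and3P: Sp => _ _ /eqP /= ->; rewrite inE.
  by apply: (iffP eqP) => [->|[j ->]]; [exists 0 | rewrite pit_root].
have [_ _ Sa] := spath_cons Sp; have pu := spath_par Sp.
rewrite inE; apply: (iffP orP) => [[/eqP -> | /(IHp _ Sa) [j ->]] | [[|j] ->]].
- by exists 0.
- by exists j.+1; rewrite pitSr pu.
- by left.
- by right; apply/(IHp _ Sa); exists j; rewrite pitSr pu.
Qed.

Lemma anc_spath u p x : spath u p r -> anc x u = (x \in u :: p).
Proof.
move=> Sp; have Sr := spath_rev Sp.
case/and3P: Sp => _ _ /eqP Lp.
by rewrite /Defs.anc (onpath_spath _ Sr) -{1}Lp rev_belast_cons mem_rev.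
Qed.

Lemma ancP x u : reflect (exists j, x = pit j u) (anc x u).
Proof.
apply: (iffP idP); have [p Sp] := spath_exists u r.
  by rewrite (anc_spath _ Sp) => /(spath_pit Sp).
by rewrite (anc_spath _ Sp) => /(spath_pit Sp).
Qed.

Lemma anc_pit j u : anc (pit j u) u.
Proof. by apply/ancP; exists j. Qed.

Lemma anc_refl u : anc u u.
Proof. exact: (anc_pit 0). Qed.

Lemma anc_trans x y z : anc x y -> anc y z -> anc x z.
Proof. by move=> /ancP [i ->] /ancP [j ->]; rewrite pitD anc_pit. Qed.

Lemma anc_pit_pit i j u : i <= j -> anc (pit j u) (pit i u).
Proof. by move=> le_ij; rewrite -(subnK le_ij) -pitD anc_pit. Qed.

Lemma depth_eq0 w : (depth w == 0) = (w == r).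
Proof.
apply/eqP/eqP => [ | ->]; last exact: distxx.
by have [p [_ <-] <-] := shortest_walk r w; move=> /size0nil ->.
Qed.

Lemma depth_par w : depth (par w) = (depth w).-1.
Proof.
have [->|wr] := eqVneq w r; first by rewrite par_root distxx.
have [[|a p] Sp] := spath_exists w r.
  by case/and3P: Sp wr => _ _ /eqP /= ->; rewrite eqxx.
have [_ _ Sa] := spath_cons Sp; rewrite (spath_par Sp).
by rewrite distC -(size_spath Sa) distC -(size_spath Sp).
Qed.

Lemma depth_pit j u : depth (pit j u) = depth u - j.
Proof. by elim: j => [|j IHj]; rewrite ?subn0 // pitS depth_par IHj subnS. Qed.

Lemma pit_depth j u : depth u <= j -> pit j u = r.
Proof. by move=> le_uj; apply/eqP; rewrite -depth_eq0 depth_pit subn_eq0. Qed.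

Lemma dist_pit j u : dist e u (pit j u) <= j.
Proof.
elim: j => [|j IHj]; first by rewrite distxx.
apply: leq_trans (dist_triangle u (pit j u) _) _; rewrite pitS -addn1 leq_add //.
have [->|wr] := eqVneq (pit j u) r; first by rewrite par_root distxx.
exact/dist_edge/par_edge.
Qed.

Lemma anc_pit_depth w u : anc w u -> w = pit (depth u - depth w) u /\ depth w <= depth u.
Proof.
case/ancP => j ->; rewrite depth_pit leq_subr; split=> //.
have [le_ju|lt_uj] := leqP j (depth u); first by rewrite subKn.
have /eqP -> : depth u - j == 0 by rewrite subn_eq0 ltnW.
by rewrite subn0 !pit_depth // ltnW.
Qed.

Variable s : seq V.
Hypothesis s_dfs : is_dfs e r s.

Local Notation leaves := (leaves e s).
Local Notation Lset := (Lset e r s).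
Local Notation sL := (sL e r s).
Local Notation tL := (tL e r s).

Lemma dfs_uniq : uniq s.
Proof. by case: s_dfs. Qed.

Lemma mem_dfs x : x \in s.
Proof. by case: s_dfs. Qed.

Lemma dfs_block c : exists n, forall y, anc c y = (index c s <= index y s < index c s + n).
Proof.
case: s_dfs => Us _ _ _ /(_ c) [/infixP [s1 [s2 Es]] head_c].
set F := [seq x <- s | anc c x] in Es head_c.
have memF y : (y \in F) = anc c y by rewrite mem_filter mem_dfs andbT.
have blockF y : anc c y = (size s1 <= index y s < size s1 + size F).
  by rewrite -memF Es -mem_cat3_index -?Es.
have cs1 : c \notin s1.
  by apply/negP => cs1; move: (blockF c); rewrite anc_refl Es index_cat cs1 leqNgt index_mem cs1.
have idx_c : index c s = size s1.
  rewrite Es index_cat (negPf cs1) index_cat memF anc_refl.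
  by move: head_c; case: (F) => [|x F'] /= => [_ | ->]; rewrite ?eqxx addn0.
by exists (size F) => y; rewrite idx_c blockF.
Qed.

Lemma dfs_index_lt cu cv z1 z2 : ~~ anc cu cv -> index cu s < index cv s ->
  anc cu z1 -> anc cv z2 -> index z1 s < index z2 s.
Proof.
move=> not_uv lt_uv; have [n blk_u] := dfs_block cu; have [m blk_v] := dfs_block cv.
rewrite blk_u blk_v => /andP [_ lt_z1] /andP [le_z2 _].
move: not_uv; rewrite blk_u (ltnW lt_uv) /= -leqNgt => le_v.
exact: leq_trans lt_z1 (leq_trans le_v le_z2).
Qed.

Hypothesis V_nontrivial : 1 < #|V|.

(* A deepest descendant of x has its parent as its only neighbour. *)
Lemma exists_leaf_below x : exists2 z, anc x z & leaf e z.
Proof.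
have [z /= anc_xz max_z] := @arg_maxnP V x (anc x) depth (anc_refl x).
exists z => //.
have nbr_par w : e z w -> w = par z.
  move=> Ezw; case: (edge_par Ezw) => // par_wz.
  have wr : w != r by apply: contraTneq Ezw => wr; rewrite -par_wz wr par_root e_irr.
  have := max_z w (anc_trans anc_xz _); rewrite -par_wz => /(_ (anc_pit 1 w)).
  by rewrite depth_par -depth_eq0 in wr *; case: (depth w) wr => //= d _; rewrite ltnn.
have [y yz] : exists y, y != z.
  have [a [b [_ _ ab]]] := card_gt1P V_nontrivial.
  by have [az|] := eqVneq a z; [exists b; rewrite -az eq_sym | exists a].
have [[|c p] Sp] := spath_exists z y.
  by case/and3P: Sp yz => _ _ /eqP /= ->; rewrite eqxx.
have [Ezc _ _] := spath_cons Sp.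
rewrite /leaf /deg (_ : [set w | e z w] = [set c]) ?cards1 //.
apply/setP => w; rewrite !inE; apply/idP/eqP => [Ezw | -> //].
by rewrite (nbr_par _ Ezw) (nbr_par _ Ezc).
Qed.

Lemma mem_Lset x i : (i \in Lset x) = (i < size leaves) && anc x (nth r leaves i).
Proof. by rewrite mem_filter mem_iota andbC. Qed.

Lemma Lset_neq0 x : Lset x != [::].
Proof.
have [z anc_xz leaf_z] := exists_leaf_below x.
have z_leaves : z \in leaves by rewrite mem_filter leaf_z mem_dfs.
have : index z leaves \in Lset x by rewrite mem_Lset index_mem z_leaves nth_index.
by case: (Lset x).
Qed.

Lemma sL_in_Lset x : sL x \in Lset x.
Proof. by have := Lset_neq0 x; rewrite /Defs.sL; case: (Lset x) => //= i L _; rewrite mem_head. Qed.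

Lemma tL_in_Lset x : tL x \in Lset x.
Proof. by have := Lset_neq0 x; rewrite /Defs.tL; case: (Lset x) => //= i L _; rewrite mem_last. Qed.

Lemma tL_lt_sL cu cv x y : ~~ anc cu cv -> index cu s < index cv s ->
  anc cu x -> anc cv y -> tL x < sL y.
Proof.
move=> not_uv lt_uv anc_ux anc_vy.
move: (tL_in_Lset x) (sL_in_Lset y); rewrite !mem_Lset => /andP [tLx anc_x1] /andP [sLy anc_y2].
have Ul : uniq leaves by rewrite filter_uniq ?dfs_uniq.
have leaf_nth i : i < size leaves -> leaf e (nth r leaves i).
  by move=> /(mem_nth r); rewrite mem_filter => /andP [].
rewrite -(index_uniq r tLx Ul) -(index_uniq r sLy Ul) index_filter_lt ?leaf_nth //.
exact: dfs_index_lt not_uv lt_uv (anc_trans anc_ux anc_x1) (anc_trans anc_vy anc_y2).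
Qed.

Variable k : nat.

Lemma adjI'_depth u v : adjI' e r k u v -> depth v <= depth u + k /\ depth u <= depth v + k.
Proof. by case=> _ [x [/andP [le_ux le_xu] /andP [le_vx le_xv]]]; lia. Qed.

Lemma adjI_overlap i u v : adjI e r s k i u v ->
  sL (pit i v) <= tL (pit (k - 1 - i) u) /\ sL (pit i u) <= tL (pit (k - 1 - i) v).
Proof. by case=> _ [x [/andP [le_ux le_xu] /andP [le_vx le_xv]]]; lia. Qed.

Lemma adjI_sym i u v : adjI e r s k i u v -> adjI e r s k i v u.
Proof. by case=> uv [x [le_ux le_vx]]; split; [rewrite eq_sym | exists x]. Qed.

(* With i = k - min(a, k), p^(k-1-i)(u) stays below p^(a-1)(u) and p^i(v) below p^(b-1)(v). *)
Lemma not_adjI_branches u v a b : 0 < k -> 0 < a -> k < a + b ->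
  ~~ anc (pit a.-1 u) (pit b.-1 v) -> index (pit a.-1 u) s < index (pit b.-1 v) s ->
  exists2 i, i < k & ~ adjI e r s k i u v.
Proof.
move=> k_gt0 a_gt0 k_lt_ab not_uv lt_uv; exists (k - minn a k); first lia.
case/adjI_overlap=> + _; apply/negP; rewrite -ltnNge.
by apply: (tL_lt_sL not_uv lt_uv); apply: anc_pit_pit; lia.
Qed.

Lemma anc_root u : anc r u.
Proof. by have := anc_pit (depth u) u; rewrite pit_depth. Qed.

Lemma exists_deepest_common_anc u v :
  exists2 w, anc w u && anc w v & forall z, anc z u -> anc z v -> depth z <= depth w.
Proof.
have r_uv : anc r u && anc r v by rewrite !anc_root.
have [w uv_w max_w] := @arg_maxnP V r (fun z => anc z u && anc z v) depth r_uv.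
by exists w => // z anc_zu anc_zv; apply: max_w; rewrite anc_zu.
Qed.

Lemma far_not_adj u v : 0 < k -> k < dist e u v ->
  ~ adjI' e r k u v \/ exists2 i, i < k & ~ adjI e r s k i u v.
Proof.
move=> k_gt0 far.
have [w /andP [anc_wu anc_wv] deepest] := exists_deepest_common_anc u v.
have [+ le_wu] := anc_pit_depth anc_wu; move def_a : (depth u - _) => a Eu.
have [+ le_wv] := anc_pit_depth anc_wv; move def_b : (depth v - _) => b Ev.
have far_ab : k < a + b.
  have := dist_triangle u w v; rewrite (distC w v) {1}Eu {1}Ev.
  by have := dist_pit a u; have := dist_pit b v; lia.
have [a0 | a_gt0] := posnP a; first by left=> /adjI'_depth; lia.
have [b0 | b_gt0] := posnP b; first by left=> /adjI'_depth; lia.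
have not_uv : ~~ anc (pit a.-1 u) (pit b.-1 v).
  apply/negP => anc_uv; have := deepest _ (anc_pit _ u) (anc_trans anc_uv (anc_pit _ v)).
  by rewrite depth_pit; lia.
have not_vu : ~~ anc (pit b.-1 v) (pit a.-1 u).
  apply/negP => anc_vu; have := deepest _ (anc_trans anc_vu (anc_pit _ u)) (anc_pit _ v).
  by rewrite depth_pit; lia.
right; case: (ltngtP (index (pit a.-1 u) s) (index (pit b.-1 v) s)) => [lt_uv | lt_vu | eq_uv].
- exact: (not_adjI_branches k_gt0 a_gt0 far_ab not_uv lt_uv).
- rewrite addnC in far_ab.
  have [i lt_ik not_adj_vu] := not_adjI_branches k_gt0 b_gt0 far_ab not_vu lt_vu.
  by exists i => // /adjI_sym.
- move: not_uv; rewrite -(nth_index r (mem_dfs (pit a.-1 u))) eq_uv.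
  by rewrite nth_index ?mem_dfs ?anc_refl.
Qed.

End Trees.

Theorem lemma9 (V : finType) (e : rel V) (r : V) (s : seq V) (k : nat) :
  is_tree e -> ~~ leaf e r -> is_dfs e r s -> 1 <= k ->
  forall u v : V, u != v -> ~ adjTk e k u v ->
    ~ adjI' e r k u v \/ exists2 i, i < k & ~ adjI e r s k i u v.
Proof.
move=> [e_sym [e_irr [e_conn e_acyclic]]] _ s_dfs k_gt0 u v uv not_adj.
have V_nontrivial : 1 < #|V| by apply/card_gt1P; exists u, v.
by apply: far_not_adj => //; rewrite ltnNge; apply/negP => near; apply: not_adj.
Qed.
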